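(* Let $Q>0$ and let $\gamma_+$ be the larger root of $\gamma-\log\gamma=Q+1$. For $x>0$ let $w_{ex}(t)=\frac{x}{\gamma_+}t^{\frac{1-\gamma_+}{\gamma_+}}$ on $I=[0,1]$. Then $[w_{ex}]_{RH_1,[0,1]}\le Q$; for every $0<\varepsilon<\frac{1}{\gamma_+-1}$, $$\langle w_{ex}^{1+\varepsilon}\rangle_I=B\big(\langle w_{ex}\rangle_I,\langle w_{ex}\log w_{ex}\rangle_I\big),$$ where $B(x,y)=\frac{v^{\varepsilon}}{1+\varepsilon-\gamma_+\varepsilon}\big(x(1+\varepsilon)-\varepsilon\gamma_+v\big)$ with $v=v(x,y)$ determined by $y=(\log v+\gamma_+)x-v\gamma_+$, $v\le x\le\gamma_+ v$; and finally $\langle w_{ex}^{1+\frac{1}{\gamma_+-1}}\rangle_I=\infty$.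
   Context: $\langle f\rangle_J=\frac1{|J|}\int_J f$. For a weight $w$ on $[0,1]$, $[w]_{RH_1,[0,1]}=\sup_{J\subset[0,1]}\Big\langle \frac{w}{\langle w\rangle_J}\log\frac{w}{\langle w\rangle_J}\Big\rangle_J$, supremum over subintervals $J$. *)

From HB Require Import structures.
From mathcomp Require Import all_boot all_order all_algebra.
From mathcomp Require Import all_classical all_reals all_analysis.
Set Implicit Arguments. Unset Strict Implicit. Unset Printing Implicit Defensive.
Import Order.TTheory GRing.Theory Num.Theory.
Import numFieldNormedType.Exports.
Local Open Scope classical_set_scope.
Local Open Scope ring_scope.

Definition avg {R : realType} (a b : R) (f : R -> R) : \bar R :=
  (((b - a)^-1)%:E * \int[lebesgue_measure]_(t in `[a, b]) (f t)%:E)%E.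

(* [w]_{RH_1,[0,1]} = sup over subintervals J=[a,b] of [0,1] (a<b) of
   < (w/<w>_J) log (w/<w>_J) >_J  (for a locally integrable weight, <w>_J is finite) *)
Definition RH1_const01 {R : realType} (w : R -> R) : \bar R :=
  ereal_sup [set y : \bar R | exists a b : R, [/\ 0 <= a, a < b, b <= 1 &
     y = avg a b (fun t => (w t / fine (avg a b w)) * ln (w t / fine (avg a b w)))]].

Definition w_ex {R : realType} (x gamma : R) (t : R) : R :=
  x / gamma * t `^ ((1 - gamma) / gamma).

Definition Bfun {R : realType} (gamma eps x v : R) : R :=
  v `^ eps / (1 + eps - gamma * eps) * (x * (1 + eps) - eps * gamma * v).

Definition vcond {R : realType} (gamma x y v : R) : Prop :=
  0 < v /\ y = (ln v + gamma) * x - v * gamma /\ v <= x /\ x <= gamma * v.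

(* With s := 1/gamma in (0, 1) (gamma > 1 as the larger root) and p := s - 1,
   w_ex t = (x/gamma) t^p, so every average in the statement is an integral of
   t^q or t^q ln t, computed by the fundamental theorem of calculus (improper
   at 0).  On J = [a, b] the RH_1 functional equals
     ln s + gamma - 1 + ln((b - a)/(b^s - a^s))
          + (s - 1) (b^s ln b - a^s ln a)/(b^s - a^s),
   and the last two terms are <= 0 by ln z <= z - 1 and e^u >= 1 + u, leaving
   gamma - 1 - ln gamma = Q.  The averages <w> = x and <w log w> force
   v = x/gamma, because ln y = y - 1 only at y = 1; at the critical exponent
   1 + 1/(gamma - 1) the power of t becomes -1, whose integral diverges. *)

From HB Require Import structures.
From mathcomp Require Import all_boot all_order all_algebra.
From mathcomp Require Import all_classical all_reals all_analysis.
From mathcomp Require Import measurable_realfun.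
From mathcomp Require Import ring lra.
Import Order.TTheory GRing.Theory Num.Theory.
Import numFieldNormedType.Exports.
Local Open Scope classical_set_scope.
Local Open Scope ring_scope.

Section improper_FTC.
Context {R : realType}.
Notation mu := (@lebesgue_measure R).
Implicit Types (f F : R -> R) (a b : R).

Lemma is_derive_continuous f (t df : R) : is_derive t 1 f df -> {for t, continuous f}.
Proof. by move=> [h _]; apply/differentiable_continuous/derivable1_diffP. Qed.

Lemma continuous_FTC2_gt0 f F a b : 0 < a -> a < b ->
  (forall t : R, 0 < t -> {for t, continuous f}) ->
  (forall t : R, 0 < t -> is_derive t 1 F (f t)) ->
  (\int[mu]_(t in `[a, b]) (f t)%:E = (F b - F a)%:E)%E.
Proof.
move=> a0 ab cf dF.
have Fc t : 0 < t -> {for t, continuous F}.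
  by move=> t0; exact: is_derive_continuous (dF t t0).
rewrite EFinB; apply: continuous_FTC2 => //.
- apply: continuous_in_subspaceT => t; rewrite inE /= in_itv /= => /andP[hat _].
  by apply: cf; exact: lt_le_trans a0 hat.
- split.
  + move=> t; rewrite in_itv /= => /andP[hat _].
    by have [] := dF t (lt_trans a0 hat).
  + by apply: cvg_at_right_filter; apply: Fc.
  + by apply: cvg_at_left_filter; apply: Fc; exact: lt_trans a0 ab.
- move=> t; rewrite in_itv /= => /andP[hat _].
  by rewrite derive1E; have [_ ->] := dF t (lt_trans a0 hat).
Qed.

Lemma bigcup_itv_harmonic b : 0 < b ->
  \bigcup_n [set` `[b / 2 * harmonic n, b]] = `]0, b]%classic.
Proof.
move=> b0; apply/seteqP; split => y /=.
  move=> [n _]; rewrite /= !in_itv /= => /andP[ny ->]; rewrite andbT.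
  by apply: lt_le_trans ny; rewrite mulr_gt0 ?divr_gt0 ?harmonic_gt0.
rewrite in_itv /= => /andP[y0 yb].
exists (Num.truncn (b / 2 / y)) => //; rewrite /= in_itv /= yb andbT.
have := truncnS_gt (b / 2 / y); rewrite ltr_pdivrMr // => hN.
by rewrite /harmonic /= ler_pdivrMr ?ltr0n // [y * _]mulrC ltW.
Qed.

(* Monotone convergence along the exhaustion of ]0, b] by [b/(2(n+1)), b];
   this is where the constant sign of f is needed. *)
Lemma continuous_FTC2_at0 f F b : 0 < b ->
  (forall t : R, 0 < t -> {for t, continuous f}) ->
  (forall t : R, 0 < t -> is_derive t 1 F (f t)) ->
  F x @[x --> 0^'+] --> F 0 ->
  ((forall t : R, 0 < t <= b -> 0 <= f t) \/ (forall t : R, 0 < t <= b -> f t <= 0)) ->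
  (\int[mu]_(t in `[0%R, b]) (f t)%:E = (F b - F 0)%:E)%E.
Proof.
move=> b0 cf dF F0 sgn.
pose e n := b / 2 * harmonic n.
have e0 n : 0 < e n by rewrite /e mulr_gt0 ?divr_gt0 ?harmonic_gt0.
have eb n : e n < b.
  have : harmonic n <= 1 :> R by rewrite /= invf_le1 ?ler1n ?ltr0n.
  rewrite /e => h1; nra.
pose S n : set R := [set` `[e n, b]].
have S_nd : nondecreasing_seq S.
  move=> m n mn; rewrite /S subsetEset; apply: subset_itvr; rewrite bnd_simp.
  by rewrite /e ler_pM2l ?divr_gt0 // lef_pV2 ?posrE ?ltr0n // ler_nat.
have mS n : measurable (S n) by exact: measurable_itv.
have S_pos n : S n `<=` `]0, +oo[%classic.
  move=> y; rewrite /S /= !in_itv /= andbT => /andP[ey _].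
  exact: lt_le_trans (e0 n) ey.
have mf (D : set R) : D `<=` `]0, +oo[%classic -> measurable_fun D (EFin \o f).
  move=> DS; apply/measurable_EFinP; apply: measurable_funS DS _ => //.
  apply: open_continuous_measurable_fun; first exact: interval_open.
  by move=> t; rewrite inE /= in_itv /= andbT; exact: cf.
have S_cvg : (\int[mu]_(x in S n) (f x)%:E)%E @[n --> \oo] -->
    (\int[mu]_(x in `]0%R, b]) (f x)%:E)%E.
  rewrite -bigcup_itv_harmonic //; case: sgn => h.
  - apply: ge0_nondecreasing_set_cvg_integral => // [n|n y]; first exact: mf.
    rewrite /S /= in_itv /= => /andP[ey yb]; rewrite lee_fin h //.
    by rewrite yb (lt_le_trans (e0 n) ey).
  - apply: le0_nondecreasing_set_cvg_integral => // [n|n y]; first exact: mf.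
    rewrite /S /= in_itv /= => /andP[ey yb]; rewrite lee_fin h //.
    by rewrite yb (lt_le_trans (e0 n) ey).
have F_cvg : (F b - F (e n))%:E @[n --> \oo] --> (F b - F 0)%:E.
  apply/fine_cvgP; split; first by near=> n.
  apply: cvgB; first exact: cvg_cst.
  move/cvg_at_rightP: F0 => /(_ e); apply; split => //.
  by rewrite -(mulr0 (b / 2)); exact: cvgMl_tmp cvg_harmonic.
rewrite -integral_itv_obnd_cbnd; last by apply: mf => y /=; rewrite !in_itv /= andbT => /andP[].
rewrite (_ : (fun n => _) = (fun n => (F b - F (e n))%:E)) in S_cvg.
  exact: cvg_unique _ S_cvg F_cvg.
by apply: funext => n; exact: continuous_FTC2_gt0.
Unshelve. all: by end_near.
Qed.

End improper_FTC.

Section power_integrals.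
Context {R : realType}.
Notation mu := (@lebesgue_measure R).
Implicit Types (a b q r t : R).

Lemma measurable_fun_powR_ln (D : set R) r :
  measurable_fun D (fun t : R => t `^ r * ln t).
Proof.
apply: measurable_funM; first exact: measurable_funTS (measurable_powR _).
exact: measurable_funTS (@measurable_ln R).
Qed.

Lemma is_derive_powR_primitive r t : 0 < t -> r != 0 ->
  is_derive t 1 (fun u => r^-1 * u `^ r) (t `^ (r - 1)).
Proof.
move=> t0 r0.
apply: is_derive_eq; first exact: (is_deriveZ (r^-1) (is_derive1_powR r t0)).
by rewrite /GRing.scale /= mulrA mulVf // mul1r.
Qed.

Lemma integral_powR q a b : -1 < q -> 0 <= a -> a < b ->
  (\int[mu]_(t in `[a, b]) (t `^ q)%:E = ((b `^ (q + 1) - a `^ (q + 1)) / (q + 1))%:E)%E.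
Proof.
move=> q1 a0 ab.
have r0 : q + 1 != 0 by rewrite lt0r_neq0 //; lra.
have dF t : 0 < t -> is_derive t 1 (fun u => (q + 1)^-1 * u `^ (q + 1)) (t `^ q).
  by move=> t0; have := is_derive_powR_primitive _ _ t0 r0; rewrite addrK.
have cf t : 0 < t -> {for t, continuous (fun u : R => u `^ q)}.
  by move=> t0; exact: is_derive_continuous (is_derive1_powR q t0).
rewrite [_ / _]mulrC mulrBr.
move: a0 ab; rewrite le_eqVlt => /predU1P[<- ab|a0 ab]; last exact: continuous_FTC2_gt0.
apply: continuous_FTC2_at0 => //.
- rewrite powR0 // mulr0 -[X in _ --> X](mulr0 (q + 1)^-1).
  by apply: cvgMl_tmp; apply: powR_cvg0; lra.
- by left => t _; exact: powR_ge0.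
Qed.

(* [ln x <= - (2/r) x^(-r/2)] comes from [ln y <= y] at [y = x^(-r/2)]. *)
Lemma powR_ln_cvg0 r : 0 < r -> x `^ r * ln x @[x --> 0^'+] --> 0.
Proof.
move=> r0.
apply: (@squeeze_cvgr _ _ _ _ (fun x => - (2 / r) * x `^ (r / 2)) (fun=> 0)); last 2 first.
- rewrite -[X in _ --> X](mulr0 (- (2 / r))).
  by apply: cvgMl_tmp; apply: powR_cvg0; rewrite divr_gt0.
- exact: cvg_cst.
near=> x.
have x0 : 0 < x by near: x; exact: nbhs_right_gt.
have x1 : x < 1 by near: x; exact: nbhs_right_lt.
have xr0 : 0 <= x `^ r by exact: powR_ge0.
apply/andP; split; last by rewrite mulr_ge0_le0 // ln_le0 // ltW.
set y := x `^ (- (r / 2)).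
have lny_le : ln y <= y by exact/ltW/ln_sublinear/powR_gt0.
have xry : x `^ r * y = x `^ (r / 2).
  by rewrite /y -powRD ?(gt_eqF x0) ?implybT //; congr (_ `^ _); field.
have lnx : ln x = - (2 / r) * ln y by rewrite ln_powR; field; exact: lt0r_neq0.
have : 0 <= 2 / r * x `^ r by rewrite mulr_ge0 // divr_ge0 // ltW.
rewrite -xry lnx; nra.
Unshelve. all: by end_near.
Qed.

Definition powR_ln_primitive r u := r^-1 * (u `^ r * ln u) - r^-1 * (r^-1 * u `^ r).

Lemma is_derive_powR_ln_primitive q t : 0 < t -> q + 1 != 0 ->
  is_derive t 1 (powR_ln_primitive (q + 1)) (t `^ q * ln t).
Proof.
move=> t0 r0.
rewrite (_ : powR_ln_primitive (q + 1) =
   ((q + 1)^-1 \*: ((fun u : R => u `^ (q + 1)) * (@ln R))) -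
   ((q + 1)^-1 \*: (fun u : R => (q + 1)^-1 * u `^ (q + 1)))); last first.
  by apply: funext => u; rewrite /powR_ln_primitive !fctE.
apply: is_derive_eq.
  exact: (is_deriveB (is_deriveZ _ (is_deriveM (is_derive1_powR _ t0) (is_derive1_ln t0)))
                     (is_deriveZ _ (is_derive_powR_primitive _ _ t0 r0))).
rewrite /GRing.scale /= addrK.
have -> : t `^ (q + 1) = t `^ q * t by rewrite powRD ?powRr1 ?ltW ?(gt_eqF t0) ?implybT.
by field; rewrite (gt_eqF t0) r0.
Qed.

Lemma integral_powR_ln q a b : -1 < q -> 0 <= a -> a < b -> b <= 1 ->
  (\int[mu]_(t in `[a, b]) (t `^ q * ln t)%:E =
     (powR_ln_primitive (q + 1) b - powR_ln_primitive (q + 1) a)%:E)%E.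
Proof.
move=> q1 a0 ab b1.
have r0 : q + 1 != 0 by rewrite lt0r_neq0 //; lra.
have dF t : 0 < t -> is_derive t 1 (powR_ln_primitive (q + 1)) (t `^ q * ln t).
  by move=> t0; exact: is_derive_powR_ln_primitive.
have cf t : 0 < t -> {for t, continuous (fun u : R => u `^ q * ln u)}.
  move=> t0; apply: is_derive_continuous.
  exact: is_deriveM (is_derive1_powR q t0) (is_derive1_ln t0).
move: a0 ab; rewrite le_eqVlt => /predU1P[<- ab|a0 ab]; last exact: continuous_FTC2_gt0.
apply: continuous_FTC2_at0 => //.
- have -> : powR_ln_primitive (q + 1) 0 = 0.
    by rewrite /powR_ln_primitive powR0 // mul0r !mulr0 subr0.
  rewrite -[X in _ --> X](subr0 0).
  apply: cvgB; rewrite -[X in _ --> X](mulr0 (q + 1)^-1); apply: cvgMl_tmp.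
    by apply: powR_ln_cvg0; lra.
  rewrite -[X in _ --> X](mulr0 (q + 1)^-1); apply: cvgMl_tmp.
  by apply: powR_cvg0; lra.
- right => t /andP[t0 tb].
  by rewrite mulr_ge0_le0 ?powR_ge0 // ln_le0 // (le_trans tb b1).
Qed.

Lemma integral_inv_pinfty (K : R) : 0 < K ->
  (\int[mu]_(t in `[0%R, 1%R]) (K * t `^ (-1))%:E = +oo)%E.
Proof.
move=> K0; apply: eq_infty => M.
set d := expR (- ((`|M| + 1) / K)).
have d0 : 0 < d by exact: expR_gt0.
have d1 : d < 1 by rewrite /d expR_lt1 oppr_lt0 divr_gt0.
have intd : (\int[mu]_(t in `[d, 1%R]) (K * t `^ (-1))%:E = (K * ln 1 - K * ln d)%:E)%E.
  apply: (@continuous_FTC2_gt0 R _ (fun t => K * ln t)) => // t t0.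
    exact: is_derive_continuous (is_deriveZ K (is_derive1_powR (-1) t0)).
  apply: is_derive_eq; first exact: (is_deriveZ K (is_derive1_ln t0)).
  by rewrite /GRing.scale /= powR_inv1 // ltW.
apply: (@le_trans _ _ (\int[mu]_(t in `[d, 1%R]) (K * t `^ (-1))%:E)%E).
  rewrite intd lee_fin ln1 mulr0 sub0r /d expRK mulrN opprK mulrC divfK ?gt_eqF //.
  by rewrite (le_trans (ler_norm M)) // lerDl.
apply: ge0_subset_integral => //.
- apply/measurable_EFinP; apply: measurable_funM => //.
  exact: measurable_funTS (measurable_powR _).
- by move=> t _; rewrite lee_fin mulr_ge0 ?powR_ge0 // ltW.
- by apply: subset_itvr; rewrite bnd_simp ltW.
Qed.

End power_integrals.

Section integral_linear.
Context {R : realType}.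
Notation mu := (@lebesgue_measure R).
Context {D : set R} (mD : measurable D).
Implicit Types (f g : R -> R).

Lemma integrable_ge0_fin {f} {F : R} : measurable_fun D f -> (forall t, D t -> 0 <= f t) ->
  (\int[mu]_(t in D) (f t)%:E = F%:E)%E -> mu.-integrable D (EFin \o f).
Proof.
move=> mf f0 iF; apply/integrableP; split; first exact/measurable_EFinP.
under eq_integral => t /[!inE] Dt do rewrite /= ger0_norm ?f0 //.
by rewrite iF ltry.
Qed.

(* The sign conditions only serve to turn the finite integrals into integrability. *)
Lemma integral_lincomb (al be : R) {f g} {F G : R} :
  measurable_fun D f -> measurable_fun D g ->
  (forall t, D t -> 0 <= f t) -> (forall t, D t -> g t <= 0) ->
  (\int[mu]_(t in D) (f t)%:E = F%:E)%E -> (\int[mu]_(t in D) (g t)%:E = G%:E)%E ->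
  (\int[mu]_(t in D) (al * f t + be * g t)%:E = (al * F + be * G)%:E)%E.
Proof.
move=> mf mg f0 g0 iF iG.
have intf := integrable_ge0_fin mf f0 iF.
have intg : mu.-integrable D (EFin \o g).
  have Ng0 t : D t -> 0 <= - g t by move=> Dt; rewrite oppr_ge0 g0.
  have iNG : (\int[mu]_(t in D) (- g t)%:E = (- G)%:E)%E.
    apply: oppe_inj; rewrite -integral_ge0N => [|t Dt]; last by rewrite lee_fin Ng0.
    by under eq_integral do rewrite -EFinN opprK; rewrite iG EFinN oppeK.
  have mNg : measurable_fun D (fun t => - g t) by exact: measurable_funN.
  have := integrable_ge0_fin mNg Ng0 iNG.
  by move/integrableN; apply: eq_integrable => // t _ /=; rewrite opprK.
under eq_integral do rewrite EFinD !EFinM.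
rewrite integralD //; [|exact: integrableZl|exact: integrableZl].
by rewrite !integralZl // iF iG -!EFinM -EFinD.
Qed.

End integral_linear.

Section scaled_power_integrals.
Context {R : realType}.
Notation mu := (@lebesgue_measure R).
Implicit Types (a b k p : R).

Lemma integral_scaled_powR k p a b : 0 <= k -> -1 < p -> 0 <= a -> a < b ->
  (\int[mu]_(t in `[a, b]) (k * t `^ p)%:E =
     (k * ((b `^ (p + 1) - a `^ (p + 1)) / (p + 1)))%:E)%E.
Proof.
move=> k0 p1 a0 ab; under eq_integral do rewrite EFinM.
rewrite ge0_integralZl_EFin ?integral_powR //.
- by move=> t _; rewrite lee_fin powR_ge0.
- by apply/measurable_EFinP; exact: measurable_funTS (measurable_powR _).
Qed.

Lemma integral_scaled_powR_mul_ln k p a b :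
  0 < k -> -1 < p -> p != 0 -> 0 <= a -> a < b -> b <= 1 ->
  (\int[mu]_(t in `[a, b]) ((k * t `^ p) * ln (k * t `^ p))%:E =
     (k * ln k * ((b `^ (p + 1) - a `^ (p + 1)) / (p + 1)) +
      k * p * (powR_ln_primitive (p + 1) b - powR_ln_primitive (p + 1) a))%:E)%E.
Proof.
move=> k0 p1 p0 a0 ab b1.
have iP := integral_powR p a b p1 a0 ab.
have iL := integral_powR_ln p a b p1 a0 ab b1.
rewrite -(integral_lincomb _ (k * ln k) (k * p) _ _ _ _ iP iL) //.
- apply: eq_integral => t; rewrite inE /= in_itv /= => /andP[hat _].
  have := le_trans a0 hat; rewrite le_eqVlt => /predU1P[<-|t0].
    by rewrite powR0 // !(mulr0, mul0r, addr0).
  by rewrite lnM ?posrE ?powR_gt0 // ln_powR; congr EFin; ring.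
- exact: measurable_funTS (measurable_powR _).
- exact: measurable_fun_powR_ln.
- by move=> t _; exact: powR_ge0.
- move=> t; rewrite /= in_itv /= => /andP[hat tb].
  by rewrite mulr_ge0_le0 ?powR_ge0 // ln_le0 // (le_trans tb b1).
Qed.

End scaled_power_integrals.

Section real_inequalities.
Context {R : realType}.
Implicit Types (a b s : R).

Lemma powR_tangent_le s a b : 0 < s -> 0 <= a -> 0 < b ->
  a `^ s + (s - 1) * a `^ s * (ln b - ln a) <= a * b `^ (s - 1).
Proof.
move=> s0; rewrite le_eqVlt => /predU1P[<- _|a0 b0].
  by rewrite powR0 ?gt_eqF // mulr0 !mul0r add0r.
have -> : a * b `^ (s - 1) = a `^ s * expR ((s - 1) * (ln b - ln a)).
  rewrite /powR (gt_eqF a0) (gt_eqF b0) -[in LHS](lnK a0) -!expRD.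
  by congr expR; ring.
have := expR_ge1Dx ((s - 1) * (ln b - ln a)); have := powR_ge0 a s; nra.
Qed.

(* With [Z := (b - a) b^(s-1) / (b^s - a^s)], apply [ln Z <= Z - 1] and then
   the tangent inequality above. *)
Lemma ln_powR_secant_le0 s a b : 0 < s -> s < 1 -> 0 <= a -> a < b ->
  ln ((b - a) / (b `^ s - a `^ s)) +
  (s - 1) * ((b `^ s * ln b - a `^ s * ln a) / (b `^ s - a `^ s)) <= 0.
Proof.
move=> s0 s1 a0 ab.
have b0 : 0 < b by exact: le_lt_trans a0 ab.
set B := b `^ s; set A := a `^ s.
have d0 : 0 < B - A.
  by rewrite subr_gt0; apply: gt0_ltr_powR => //; rewrite nnegrE // ltW.
set E := b `^ (s - 1).
have E0 : 0 < E by exact: powR_gt0.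
have bE : b * E = B.
  rewrite /E /B -{1}(powRr1 (ltW b0)) -powRD ?(gt_eqF b0) ?implybT //.
  by congr (_ `^ _); ring.
set Z := (b - a) * E / (B - A).
have Z0 : 0 < Z by rewrite /Z divr_gt0 // mulr_gt0 // subr_gt0.
have lnZ : ln Z <= Z - 1.
  by have := @le_ln1Dx R (Z - 1); rewrite addrCA subrr addr0; apply; lra.
have -> : (b - a) / (B - A) = Z / E by rewrite /Z; field; rewrite !gt_eqF.
rewrite ln_div ?posrE // /E ln_powR.
have tangent := powR_tangent_le s a b s0 a0 b0; rewrite -/A -/E in tangent.
suff : Z - 1 - (s - 1) * ln b + (s - 1) * ((B * ln b - A * ln a) / (B - A)) <= 0.
  by lra.
have -> : Z - 1 - (s - 1) * ln b + (s - 1) * ((B * ln b - A * ln a) / (B - A)) =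
    (A + (s - 1) * A * (ln b - ln a) - a * E + (b * E - B)) / (B - A).
  by rewrite /Z; field; rewrite gt_eqF.
rewrite bE subrr addr0.
by rewrite pmulr_lle0 ?invr_gt0 //; lra.
Qed.

Lemma larger_root_gt1 (Q g : R) : 0 < Q -> 0 < g -> g - ln g = Q + 1 ->
  (forall h : R, 0 < h -> h - ln h = Q + 1 -> h <= g) -> 1 < g.
Proof.
move=> Q0 g0 hg hl.
pose M := 2 * (Q + 1).
have lnM : ln M <= Q + 1.
  rewrite /M lnM ?posrE; [|lra|lra].
  have : ln (1 + 1) <= 1 :> R by apply: le_ln1Dx; lra.
  have : ln (1 + Q) <= Q by apply: le_ln1Dx; lra.
  by rewrite [Q + 1]addrC; lra.
have [c] : exists2 c, c \in `[1, M] & c - ln c = Q + 1.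
  apply: (IVT (f := fun u => u - ln u)); first by rewrite /M; lra.
    apply: continuous_in_subspaceT => u; rewrite inE /= in_itv /= => /andP[u1 _].
    by apply: continuousB; [exact: cvg_id | apply: continuous_ln; lra].
  rewrite /= ln1 subr0 ge_min le_max; apply/andP; split; apply/orP; [left|right]; rewrite /M; lra.
rewrite in_itv /= => /andP[c1 _] hc.
have c_ne1 : c != 1 by apply/eqP => c1'; move: hc; rewrite c1' ln1 subr0; lra.
have c_gt1 : 1 < c by rewrite lt_neqAle eq_sym c_ne1.
by have := hl c (lt_trans ltr01 c_gt1) hc; lra.
Qed.

(* [ln y = y - 1] forces [y = 1], for [y := g v / X]. *)
Lemma vcond_extremalE {g X : R} (v : R) : 1 < g -> 0 < X ->
  vcond g X ((ln (X / g) + g) * X - X / g * g) v <-> v = X / g.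
Proof.
move=> g1 X0; have g0 : 0 < g by lra.
split=> [[v0 [heq [_ Xv]]]|->]; last first.
  split; first exact: divr_gt0.
  split=> //; split; last by rewrite mulrC divfK ?gt_eqF.
  by rewrite ler_pdivrMr // ler_peMr // ltW.
set y := g * v / X.
have y0 : 0 < y by rewrite /y divr_gt0 // mulr_gt0.
have vy : v = X / g * y by rewrite /y; field; rewrite !gt_eqF.
have lnv : ln v = ln (X / g) + ln y by rewrite vy lnM // posrE divr_gt0.
have hy : ln y = y - 1.
  suff : X * ln y = X * (y - 1) by apply: mulfI; rewrite gt_eqF.
  have e1 : X / g * g = X by field; rewrite gt_eqF.
  have e2 : v * g = X * y by rewrite vy; field; rewrite gt_eqF.
  by move: heq; rewrite lnv e1 e2 !mulrDl mulrBr; lra.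
have [ly0|ly0] := eqVneq (ln y) 0.
  by rewrite vy -(lnK y0) ly0 expR0 mulr1.
by have := expR_gt1Dx ly0; rewrite lnK //; lra.
Qed.

End real_inequalities.

Lemma avg01E {R : realType} (f : R -> R) :
  avg 0 1 f = (\int[lebesgue_measure]_(t in `[0%R, 1%R]) (f t)%:E)%E.
Proof. by rewrite /avg subr0 invr1 mul1e. Qed.

Section extremal_weight.
Context {R : realType}.
Context {x gamma : R} (x0 : 0 < x) (g1 : 1 < gamma).
Notation w := (w_ex x gamma).

Let g0 : 0 < gamma. Proof. exact: lt_trans ltr01 g1. Qed.

Let c_gt0 : 0 < x / gamma. Proof. exact: divr_gt0. Qed.

Let w_exponentD1 : (1 - gamma) / gamma + 1 = gamma^-1.
Proof. by field; rewrite gt_eqF. Qed.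

Let w_exponent_gtN1 : -1 < (1 - gamma) / gamma.
Proof. by rewrite -subr_gt0 opprK w_exponentD1 invr_gt0. Qed.

Let w_exponent_neq0 : (1 - gamma) / gamma != 0.
Proof.
by apply: mulf_neq0; [rewrite subr_eq0 eq_sym gt_eqF | rewrite invr_eq0 gt_eqF].
Qed.

Lemma avg01_w_ex_powRE e : avg 0 1 (fun t => w t `^ e) =
  (\int[lebesgue_measure]_(t in `[0%R, 1%R])
     ((x / gamma) `^ e * t `^ ((1 - gamma) / gamma * e))%:E)%E.
Proof.
rewrite avg01E; apply: eq_integral => t; rewrite inE /= in_itv /= => /andP[t0 _].
by rewrite /w_ex powRM ?powR_ge0 ?(ltW c_gt0) // -powRrM.
Qed.

Lemma avg_w_ex a b : 0 <= a -> a < b ->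
  avg a b w = ((b - a)^-1 * (x * (b `^ gamma^-1 - a `^ gamma^-1)))%:E.
Proof.
move=> a0 ab; rewrite /avg /w_ex integral_scaled_powR ?(ltW c_gt0) //.
by rewrite w_exponentD1 -EFinM; congr EFin; field; rewrite !gt_eqF ?subr_gt0.
Qed.

(* On [J = [a, b]] we have [w / <w>_J = k t^p] with [p = 1/gamma - 1] and
   [k = (b - a) / (gamma (b^(1/gamma) - a^(1/gamma)))]. *)
Lemma avg_w_ex_entropy_le a b : 0 <= a -> a < b -> b <= 1 ->
  (avg a b (fun t => (w t / fine (avg a b w) * ln (w t / fine (avg a b w)))%R) <=
   (gamma - 1 - ln gamma)%:E)%E.
Proof.
move=> a0 ab b1; rewrite avg_w_ex //=.
set s := gamma^-1; set p := (1 - gamma) / gamma.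
have s0 : 0 < s by rewrite invr_gt0.
have s1 : s < 1 by rewrite invf_lt1.
set B := b `^ s; set A := a `^ s.
have BA : 0 < B - A.
  by rewrite subr_gt0; apply: gt0_ltr_powR => //; rewrite nnegrE (le_trans a0 (ltW ab)).
set m := (b - a)^-1 * (x * (B - A)).
set k := x / gamma / m.
have wk t : w t / m = k * t `^ p by rewrite /w_ex mulrAC.
have hk : k = s * ((b - a) / (B - A)).
  by rewrite /k /m /s; field; rewrite !gt_eqF // subr_gt0.
have k0 : 0 < k by rewrite hk mulr_gt0 // divr_gt0 // subr_gt0.
rewrite /avg; under eq_integral do rewrite wk.
rewrite integral_scaled_powR_mul_ln // w_exponentD1 -EFinM lee_fin.
have -> : (b - a)^-1 * (k * ln k * ((B - A) / s) +
                        k * p * (powR_ln_primitive s b - powR_ln_primitive s a)) =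
    ln k + p * ((B * ln b - A * ln a) / (B - A)) - p / s.
  by rewrite /powR_ln_primitive hk -/B -/A; field; rewrite !gt_eqF // subr_gt0.
have -> : p = s - 1 by rewrite /s -w_exponentD1 addrK.
have ba : 0 < b - a by rewrite subr_gt0.
have lns : ln s = - ln gamma by rewrite /s lnV ?posrE.
have ps : (s - 1) / s = 1 - gamma by rewrite /s; field; rewrite gt_eqF.
rewrite hk lnM ?posrE ?divr_gt0 // lns ps.
by have := ln_powR_secant_le0 s a b s0 s1 a0 ab; rewrite -/B -/A; lra.
Qed.

Lemma RH1_const01_w_ex_le : (RH1_const01 w <= (gamma - 1 - ln gamma)%:E)%E.
Proof. by apply: ge_ereal_sup => _ [a [b [a0 ab b1 ->]]]; exact: avg_w_ex_entropy_le. Qed.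

Lemma avg01_w_ex : avg 0 1 w = x%:E.
Proof.
by rewrite avg_w_ex // powR1 powR0 ?invr_eq0 ?gt_eqF // subr0 invr1 !mul1r mulr1.
Qed.

Lemma avg01_w_ex_mul_ln :
  avg 0 1 (fun t => w t * ln (w t)) = ((ln (x / gamma) + gamma) * x - x / gamma * gamma)%:E.
Proof.
rewrite avg01E /w_ex integral_scaled_powR_mul_ln // w_exponentD1.
rewrite /powR_ln_primitive powR1 powR0 ?invr_eq0 ?gt_eqF // ln1.
by congr EFin; field; rewrite gt_eqF.
Qed.

Lemma avg01_w_ex_powR eps : 0 < 1 + eps - gamma * eps ->
  avg 0 1 (fun t => w t `^ (1 + eps)) = (Bfun gamma eps x (x / gamma))%:E.
Proof.
move=> eps_lt.
have pe : (1 - gamma) / gamma * (1 + eps) + 1 = (1 + eps - gamma * eps) / gamma.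
  by field; rewrite gt_eqF.
have peN1 : -1 < (1 - gamma) / gamma * (1 + eps) by rewrite -subr_gt0 opprK pe divr_gt0.
rewrite avg01_w_ex_powRE integral_scaled_powR ?powR_ge0 // pe.
rewrite powR1 powR0 ?gt_eqF ?divr_gt0 // subr0 mul1r.
rewrite powRD ?(gt_eqF c_gt0) ?implybT // powRr1 ?(ltW c_gt0) //.
by rewrite /Bfun; congr EFin; field; rewrite !gt_eqF.
Qed.

Lemma avg01_w_ex_powR_pinfty :
  avg 0 1 (fun t => w t `^ (1 + (gamma - 1)^-1)) = +oo%E.
Proof.
have pe : (1 - gamma) / gamma * (1 + (gamma - 1)^-1) = -1.
  by field; rewrite !gt_eqF ?subr_gt0.
by rewrite avg01_w_ex_powRE pe integral_inv_pinfty // powR_gt0.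
Qed.

End extremal_weight.

Theorem lemma7 (R : realType) (Q gamma x : R) (hQ : 0 < Q)
  (hgpos : 0 < gamma) (hroot : gamma - ln gamma = Q + 1)
  (hlarger : forall g : R, 0 < g -> g - ln g = Q + 1 -> g <= gamma)
  (hx : 0 < x) :
  (RH1_const01 (w_ex x gamma) <= Q%:E)%E /\
  (forall eps : R, 0 < eps -> eps < (gamma - 1)^-1 ->
     exists X Y : R,
       avg 0 1 (w_ex x gamma) = X%:E /\
       avg 0 1 (fun t => w_ex x gamma t * ln (w_ex x gamma t)) = Y%:E /\
       (exists v : R, vcond gamma X Y v) /\
       (forall v : R, vcond gamma X Y v ->
          avg 0 1 (fun t => w_ex x gamma t `^ (1 + eps)) = (Bfun gamma eps X v)%:E)) /\
  avg 0 1 (fun t => w_ex x gamma t `^ (1 + (gamma - 1)^-1)) = +oo%E.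
Proof.
have g1 : 1 < gamma := larger_root_gt1 Q gamma hQ hgpos hroot hlarger.
split.
  have -> : Q = gamma - 1 - ln gamma by lra.
  exact: RH1_const01_w_ex_le hx g1.
split; last exact: avg01_w_ex_powR_pinfty hx g1.
move=> eps _ eps_lt.
have eps_pos : 0 < 1 + eps - gamma * eps.
  have gm1 : 0 < gamma - 1 by rewrite subr_gt0.
  have : eps * (gamma - 1) < 1 by move: eps_lt; rewrite -div1r ltr_pdivlMr.
  by rewrite mulrBr mulr1; lra.
exists x, ((ln (x / gamma) + gamma) * x - x / gamma * gamma).
split; first exact: avg01_w_ex hx g1.
split; first exact: avg01_w_ex_mul_ln hx g1.
split; first by exists (x / gamma); apply/(vcond_extremalE _ g1 hx).
move=> v /(vcond_extremalE v g1 hx) ->.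
exact: avg01_w_ex_powR.
Qed.
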